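(* Let $\mathsf G=(\mathsf V,\mathsf E)$ be a finite connected graph without loops or multiple edges, with discrete Laplacian $\mathcal L=\mathcal I\mathcal I^T$ acting on $\ell^2(\mathsf V)$. The following assertions are equivalent: (i) $\mathsf G$ is complete; (ii) the semigroup $(e^{-t\mathcal L^2})_{t\ge 0}$ is positive, i.e. $e^{-t\mathcal L^2}f$ has nonnegative entries for all $t\ge0$ and all $f$ with nonnegative entries; (iii) the semigroup $(e^{-t\mathcal L^2})_{t\ge0}$ is $\ell^\infty$-contractive, i.e. $\|e^{-t\mathcal L^2}f\|_\infty\le\|f\|_\infty$ for all $t\ge0$ and all $f\in\mathbb C^V$.
   Context: $V=|\mathsf V|$ and $\ell^2(\mathsf V)=\mathbb C^V$. After fixing an arbitrary orientation of the edges, the incidence matrix $\mathcal I\in\mathbb R^{V\times E}$ has entries $\iota_{\mathsf v\mathsf e}=-1$ if $\mathsf v$ is the initial endpoint of $\mathsf e$, $+1$ if $\mathsf v$ is the terminal endpoint of $\mathsf e$, and $0$ otherwise; $\mathcal L=\mathcal I\mathcal I^T$ is the discrete Laplacian (independent of the orientation). A graph is complete if every pair of distinct vertices is joined by exactly one edge. *)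

From HB Require Import structures.
From mathcomp Require Import all_boot all_order all_algebra.
From mathcomp Require Import all_classical all_reals all_analysis.
From mathcomp Require Import complex.
Set Implicit Arguments. Unset Strict Implicit. Unset Printing Implicit Defensive.
Import Order.TTheory GRing.Theory Num.Theory.
Local Open Scope classical_set_scope.
Local Open Scope ring_scope.

Definition simple_graph n (e : rel 'I_n) : Prop := symmetric e /\ irreflexive e.
Definition connected_graph n (e : rel 'I_n) : Prop := forall x y, connect e x y.
Definition complete_graph n (e : rel 'I_n) : Prop := forall x y, x != y -> e x y.

(* Edge list with a fixed orientation: the edge {x,y} with x < y is
   oriented from x (initial) to y (terminal). *)
Definition edges n (e : rel 'I_n) : seq ('I_n * 'I_n) :=
  [seq p <- enum [set: 'I_n * 'I_n] | e p.1 p.2 && (p.1 < p.2)%N].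

Definition incidence (R : pzRingType) n (e : rel 'I_n) : 'M[R]_(n, size (edges e)) :=
  \matrix_(v, k) (let p := nth (v, v) (edges e) k in
                  if v == p.1 then -1 else if v == p.2 then 1 else 0).

Definition laplacian (R : pzRingType) n (e : rel 'I_n) : 'M[R]_n :=
  incidence R e *m (incidence R e)^T.

Definition expmx (R : realType) n (M : 'M[R]_n) : 'M[R]_n :=
  \matrix_(i, j) lim ((fun N : nat => \sum_(k < N) (M ^+ k) i j / (k`!)%:R) @ \oo).

Definition heat_bilap (R : realType) n (e : rel 'I_n) (t : R) : 'M[R]_n :=
  expmx ((- t) *: (laplacian R e *m laplacian R e)).

Definition supnorm (R : realType) n (f : 'cV[R[i]]_n) : R :=
  \big[Num.max/0]_(j < n) ComplexField.Normc.normc (f j 0).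

Definition positive_semigroup (R : realType) n (P : R -> 'M[R]_n) : Prop :=
  forall t : R, 0 <= t -> forall f : 'cV[R]_n,
    (forall j, 0 <= f j 0) -> forall i, 0 <= (P t *m f) i 0.

Definition linfty_contractive (R : realType) n (P : R -> 'M[R]_n) : Prop :=
  forall t : R, 0 <= t -> forall f : 'cV[R[i]]_n,
    supnorm (map_mx (real_complex R) (P t) *m f) <= supnorm f.

Arguments incidence R {n} e.
Arguments laplacian R {n} e.
Arguments heat_bilap R {n} e t.

From HB Require Import structures.
From mathcomp Require Import all_boot all_order all_algebra.
From mathcomp Require Import all_classical all_reals all_analysis.
From mathcomp Require Import complex.
From mathcomp Require Import ring lra.
Import Order.TTheory GRing.Theory Num.Theory.
Import numFieldNormedType.Exports.
Local Open Scope classical_set_scope.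
Local Open Scope ring_scope.
Set Implicit Arguments. Unset Strict Implicit. Unset Printing Implicit Defensive.

(* Since L 1 = 0, every e^{-tL^2} has row sums 1, so the semigroup is positive iff it
   is l^oo-contractive iff all its entries are nonnegative.  For the complete graph
   L^2 = n L, and e^{-tL^2} = (1 - e^{-tn^2}) J/n + e^{-tn^2} Id has nonnegative entries.
   Otherwise, by connectedness, there is an induced path a - b - c; then L a c = 0 while
   (L^2) a c >= 1, so e^{-tL^2} a c = - t (L^2) a c + O(t^2) is negative for small t > 0. *)

Lemma not_complete_induced_path2 n (e : rel 'I_n) :
  connected_graph e -> ~ complete_graph e ->
  exists a b c, [/\ e a b, e b c, a != c & ~~ e a c].
Proof.
move=> e_conn e_not_complete.
have [//|no_path2] := pselect (exists a b c, [/\ e a b, e b c, a != c & ~~ e a c]).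
exfalso; apply: e_not_complete => x y xy.
have trans a b c : e a b -> e b c -> a != c -> e a c.
  by move=> ab bc ac; apply/negPn/negP => nac; apply: no_path2; exists a, b, c.
have reach p : path e x p -> last x p = x \/ e x (last x p).
  elim/last_ind: p => [|p z IHp] /=; first by left.
  rewrite rcons_path last_rcons => /andP[/IHp [->|xw] wz]; first by right.
  by have [->|xz] := eqVneq x z; [left | right; exact: trans xw wz xz].
move: xy; have [p xp ->] := connectP (e_conn x y).
by case: (reach p xp) => [->|//]; rewrite eqxx.
Qed.

Section Laplacian.
Variables (R : comPzRingType) (n : nat) (e : rel 'I_n).

Definition incidence_sign (v : 'I_n) (p : 'I_n * 'I_n) : R :=
  if v == p.1 then -1 else if v == p.2 then 1 else 0.

Lemma mem_edges p : (p \in edges e) = e p.1 p.2 && (p.1 < p.2)%N.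
Proof. by rewrite mem_filter mem_enum in_setT andbT. Qed.

Lemma uniq_edges : uniq (edges e).
Proof. by rewrite filter_uniq // enum_uniq. Qed.

Lemma laplacianE i j :
  laplacian R e i j = \sum_(p <- edges e) incidence_sign i p * incidence_sign j p.
Proof.
rewrite /laplacian !mxE (big_nth (i, i)) big_mkord.
apply: eq_bigr => k _; rewrite !mxE.
by rewrite (set_nth_default (i, i) (j, j)) ?ltn_ord.
Qed.

Lemma laplacian_sym i j : laplacian R e i j = laplacian R e j i.
Proof. by rewrite !laplacianE; apply: eq_bigr => p _; rewrite mulrC. Qed.

Lemma sum_incidence_sign p : p.1 != p.2 -> \sum_j incidence_sign j p = 0.
Proof.
move=> p12; rewrite (bigD1 p.1) //= (bigD1 p.2) 1?eq_sym //= big1 => [|j /andP[j2 j1]].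
  by rewrite /incidence_sign eqxx eq_sym (negbTE p12) eqxx addr0 addNr.
by rewrite /incidence_sign (negbTE j1) (negbTE j2).
Qed.

Lemma laplacian_rowsum i : \sum_j laplacian R e i j = 0.
Proof.
under eq_bigr do rewrite laplacianE.
rewrite exchange_big /= big_seq big1 // => p; rewrite mem_edges => /andP[_ lt12].
by rewrite -mulr_sumr sum_incidence_sign ?mulr0 // neq_ltn lt12.
Qed.

Lemma incidence_sign_mul (i j : 'I_n) (p : 'I_n * 'I_n) : (i < j)%N -> (p.1 < p.2)%N ->
  incidence_sign i p * incidence_sign j p = - (p == (i, j))%:R.
Proof.
case: p => a b /= ij ab; rewrite /incidence_sign /= xpair_eqE (eq_sym a) (eq_sym b).
have ji : (j == i) = false by apply/negbTE; rewrite -val_eqE /= gtn_eqF.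
have [<-|ia] := eqVneq i a; first by rewrite ji mulN1r; case: (j == b).
rewrite oppr0; have [ib|_] := eqVneq i b; last by rewrite mul0r.
subst b; have ja : (j == a) = false by apply/negbTE; rewrite -val_eqE /= gtn_eqF ?(ltn_trans ab).
by rewrite ja ji mulr0.
Qed.

Lemma laplacian_offdiag (i j : 'I_n) : symmetric e -> i != j ->
  laplacian R e i j = - (e i j)%:R.
Proof.
move=> esym; wlog ij : i j / (i < j)%N => [hwlog ne|_].
  case: (ltngtP i j) => [lt|gt|/val_inj eq]; first exact: hwlog.
    by rewrite laplacian_sym esym hwlog // eq_sym.
  by rewrite eq eqxx in ne.
rewrite laplacianE big_seq (eq_bigr (fun p => - (p == (i, j))%:R)); last first.
  by move=> p; rewrite mem_edges => /andP[_]; apply: incidence_sign_mul.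
rewrite -big_seq sumrN; congr (- _).
have -> : e i j = ((i, j) \in edges e) by rewrite mem_edges /= ij andbT.
rewrite -count_uniq_mem ?uniq_edges // -sum1_count natr_sum [RHS]big_mkcond.
by apply: eq_bigr => p _ /=; case: (_ == _).
Qed.

End Laplacian.

Section MatrixExponential.
Variables (R : realType) (n : nat).
Implicit Types A : 'M[R]_n.

Definition mx_abs_sum A := \sum_i \sum_j `|A i j|.

Lemma row_abs_sum_le A i : \sum_j `|A i j| <= mx_abs_sum A.
Proof.
rewrite /mx_abs_sum [leRHS](bigD1 i) //= lerDl.
by apply: sumr_ge0 => k _; apply: sumr_ge0.
Qed.

Lemma norm_mxpow_le A c : 0 <= c -> (forall i, \sum_j `|A i j| <= c) ->
  forall k i j, `|(A ^+ k) i j| <= c ^+ k.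
Proof.
move=> c_ge0 rowA; elim=> [|k IHk] i j.
  by rewrite expr0 mxE; case: (i == j); rewrite ?normr1 ?normr0.
rewrite exprS -mulmxE mxE; apply: le_trans (ler_norm_sum _ _ _) _.
apply: le_trans (_ : \sum_l `|A i l| * c ^+ k <= _).
  by apply: ler_sum => l _; rewrite normrM ler_wpM2l.
by rewrite -mulr_suml exprS ler_wpM2r ?exprn_ge0.
Qed.

Lemma is_cvg_expmx_series A i j :
  cvgn (fun N : nat => \sum_(k < N) (A ^+ k) i j / (k`!)%:R).
Proof.
have -> : (fun N : nat => \sum_(k < N) (A ^+ k) i j / (k`!)%:R) =
          series (fun k => (A ^+ k) i j / (k`!)%:R) by rewrite seriesEord.
apply: normed_cvg; apply: (@series_le_cvg _ _ (exp_coeff (mx_abs_sum A))).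
- by move=> k; rewrite normr_ge0.
- by move=> k; rewrite exp_coeff_ge0 // sumr_ge0 // => l _; rewrite sumr_ge0.
- move=> k; rewrite /exp_coeff /= normrM normfV [`|_%:R|]ger0_norm //.
  rewrite ler_wpM2r ?invr_ge0 // norm_mxpow_le //; last exact: row_abs_sum_le.
  by rewrite sumr_ge0 // => l _; rewrite sumr_ge0.
- exact: is_cvg_series_exp_coeff.
Qed.

Lemma mxpow_rowsum A : (forall i, \sum_j A i j = 0) ->
  forall k i, \sum_j (A ^+ k) i j = (k == 0)%:R.
Proof.
move=> rowA [|k] i.
  rewrite expr0 (bigD1 i) //= big1 => [|j ji]; first by rewrite mxE eqxx addr0.
  by rewrite mxE eq_sym (negbTE ji).
rewrite exprSr -mulmxE; under eq_bigr do rewrite mxE.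
by rewrite exchange_big /= big1 // => l _; rewrite -mulr_sumr rowA mulr0.
Qed.

Lemma expmx_rowsum A : (forall i, \sum_j A i j = 0) ->
  forall i, \sum_j expmx A i j = 1.
Proof.
move=> rowA i.
have cvg_sum : (fun N : nat => \sum_j \sum_(k < N) (A ^+ k) i j / (k`!)%:R) @ \oo
    --> \sum_j expmx A i j.
  by apply: cvg_big => [|j _]; [exact: add_continuous | rewrite mxE; exact: is_cvg_expmx_series].
rewrite -(cvg_lim (@norm_hausdorff _ _) cvg_sum).
apply: (lim_near_cst (@norm_hausdorff _ _)); near=> N.
have [m ->] : exists m, N = m.+1 by exists N.-1; rewrite prednK //; near: N; exists 1%N.
rewrite exchange_big big_ord_recl /= -mulr_suml mxpow_rowsum // divr1 big1 ?addr0 // => k _.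
by rewrite -mulr_suml mxpow_rowsum // mul0r.
Unshelve. all: by end_near.
Qed.

Lemma sum_expr_half_le (c : R) m : 0 <= c <= 1/2 ->
  \sum_(k < m) c ^+ k <= 2 - 2 * c ^+ m.
Proof.
move=> /andP[c_ge0 c_le]; elim: m => [|m IHm]; first by rewrite big_ord0 expr0 mulr1 subrr.
rewrite big_ord_recr /= exprSr.
have : 0 <= c ^+ m by rewrite exprn_ge0.
move: IHm; set x := c ^+ m; nra.
Qed.

(* Off the diagonal the series is A i j plus a tail bounded by c^2 \sum_k c^k <= 2 c^2. *)
Lemma expmx_offdiag_le A c i j : i != j -> 0 <= c <= 1/2 ->
  (forall i, \sum_j `|A i j| <= c) -> expmx A i j <= A i j + 2 * c ^+ 2.
Proof.
move=> ij c_range rowA; have /andP[c_ge0 _] := c_range.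
rewrite mxE; apply: limr_le; first exact: is_cvg_expmx_series.
near=> N; have [m ->] : exists m, N = m.+2.
  by exists (N - 2)%N; rewrite -addn2 subnK //; near: N; exists 2%N.
rewrite !big_ord_recl /= expr0 mxE (negbTE ij) mul0r add0r /bump /= expr1 divr1 lerD2l.
apply: le_trans (_ : \sum_(k < m) c ^+ 2 * c ^+ k <= _).
  apply: le_trans (ler_norm _) _; apply: le_trans (ler_norm_sum _ _ _) _.
  apply: ler_sum => k _; rewrite !add1n normrM normfV [`|_%:R|]ger0_norm // -exprD.
  rewrite -[leRHS]mulr1 ler_pM ?invr_ge0 ?add2n ?norm_mxpow_le //.
  by rewrite invf_le1 ?ltr0n ?fact_gt0 // ler1n fact_gt0.
rewrite -mulr_sumr mulrC ler_wpM2r ?exprn_ge0 //.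
apply: le_trans (sum_expr_half_le m c_range) _.
by rewrite lerBlDr lerDl mulr_ge0 ?exprn_ge0.
Unshelve. all: by end_near.
Qed.

Lemma expmx_idem (P : 'M[R]_n) a :
  P *m P = P -> expmx (a *: P) = 1 - P + expR a *: P.
Proof.
move=> PP; apply/matrixP => i j; rewrite !mxE.
have powP k : (a *: P) ^+ k.+1 = a ^+ k.+1 *: P.
  elim: k => [|k IHk]; first by rewrite !expr1.
  by rewrite exprS IHk -mulmxE -scalemxAl -scalemxAr scalerA PP -exprS.
apply: (cvg_lim (@norm_hausdorff _ _)); rewrite -cvg_shiftS.
have -> : [sequence \sum_(k < N.+1) ((a *: P) ^+ k) i j / (k`!)%:R]_N =
    (fun N => ((i == j)%:R - P i j) + series (exp_coeff a) N.+1 * P i j).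
  apply: funext => N /=; rewrite seriesEord /= !big_ord_recl /= expr0 mxE.
  rewrite /exp_coeff /= expr0 fact0 divr1 mul1r invr1 mulrDl mul1r mulr_suml addrA subrK.
  by congr (_ + _); apply: eq_bigr => k _; rewrite powP mxE mulrAC.
apply: cvgD; first exact: cvg_cst.
by apply: cvgMr_tmp; rewrite cvg_shiftS; exact: is_cvg_series_exp_coeff.
Qed.

End MatrixExponential.

Section SupNorm.
Variables (R : realType) (n : nat).
Import ComplexField.Normc.

Lemma normc_real (x : R) : normc (real_complex R x) = `|x|.
Proof. by rewrite /normc /= expr0n /= addr0 sqrtr_sqr. Qed.

Lemma normc_sum (I : Type) (r : seq I) (F : I -> R[i]) :
  normc (\sum_(j <- r) F j) <= \sum_(j <- r) normc (F j).
Proof.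
elim: r => [|a r IHr]; first by rewrite !big_nil normc0.
by rewrite !big_cons; apply: le_trans (le_normcD _ _) _; rewrite lerD2l.
Qed.

Lemma normc_le_supnorm (f : 'cV[R[i]]_n) j : normc (f j 0) <= supnorm f.
Proof. exact: (le_bigmax _ (fun j => normc (f j 0))). Qed.

Lemma supnorm_le (f : 'cV[R[i]]_n) (x : R) : 0 <= x ->
  (forall j, normc (f j 0) <= x) -> supnorm f <= x.
Proof. by move=> x_ge0 f_le; apply: bigmax_le. Qed.

Section Stochastic.
Variable H : 'M[R]_n.
Hypothesis rowH : forall i, \sum_j H i j = 1.

Lemma stochastic_supnorm_le : (forall i j, 0 <= H i j) ->
  forall f : 'cV[R[i]]_n, supnorm (map_mx (real_complex R) H *m f) <= supnorm f.
Proof.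
move=> H_ge0 f; apply: supnorm_le => [|i]; first exact: bigmax_ge_id.
rewrite mxE; apply: le_trans (normc_sum _ _) _.
apply: le_trans (_ : \sum_j H i j * supnorm f <= _); last by rewrite -mulr_suml rowH mul1r.
apply: ler_sum => j _; rewrite mxE normcM normc_real ger0_norm //.
by rewrite ler_wpM2l ?normc_le_supnorm.
Qed.

(* Test against f = 1 - 2 e_j: its image at i is 1 - 2 H i j, of modulus at most 1. *)
Lemma supnorm_contractive_ge0 :
  (forall f : 'cV[R[i]]_n, supnorm (map_mx (real_complex R) H *m f) <= supnorm f) ->
  forall i j, 0 <= H i j.
Proof.
move=> contrH i j; set g : 'cV[R]_n := \col_k (1 - 2 * (k == j)%:R).
have Hg : (H *m g) i 0 = 1 - 2 * H i j.
  rewrite mxE; under eq_bigr do rewrite mxE mulrBr mulr1.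
  rewrite sumrB rowH (bigD1 j) //= big1 => [|k /negbTE->]; last by rewrite !mulr0.
  by rewrite eqxx mulr1 addr0 mulrC.
have g_le1 : supnorm (map_mx (real_complex R) g) <= 1.
  apply: supnorm_le => // k; rewrite !mxE normc_real.
  case: (k == j); last by rewrite mulr0 subr0 normr1.
  by rewrite mulr1 (_ : 1 - 2 = -1 :> R) ?normrN ?normr1 //; lra.
have := le_trans (normc_le_supnorm _ i) (le_trans (contrH _) g_le1).
rewrite -map_mxM mxE Hg normc_real => /(le_trans (ler_norm _)); lra.
Qed.

End Stochastic.
End SupNorm.

Section Semigroups.
Variables (R : realType) (n : nat) (P : R -> 'M[R]_n).

Lemma positive_semigroupP :
  positive_semigroup P <-> forall t, 0 <= t -> forall i j, 0 <= P t i j.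
Proof.
split=> [posP t t_ge0 i j | P_ge0 t t_ge0 f f_ge0 i].
  have ej_ge0 k : 0 <= (\col_l ((l == j)%:R : R)) k 0 by rewrite mxE ler0n.
  have := posP t t_ge0 _ ej_ge0 i.
  rewrite mxE (bigD1 j) //= big1 => [|k /negbTE kj]; last by rewrite mxE kj mulr0.
  by rewrite mxE eqxx mulr1 addr0.
by rewrite mxE; apply: sumr_ge0 => j _; rewrite mulr_ge0 ?P_ge0.
Qed.

Lemma linfty_contractiveP : (forall t i, \sum_j P t i j = 1) ->
  linfty_contractive P <-> forall t, 0 <= t -> forall i j, 0 <= P t i j.
Proof.
move=> rowP; split=> [contrP t t_ge0 | P_ge0 t t_ge0].
  exact/supnorm_contractive_ge0/contrP.
exact/stochastic_supnorm_le/P_ge0.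
Qed.

End Semigroups.

Section Graph.
Variables (R : realType) (n : nat) (e : rel 'I_n).
Hypothesis e_simple : simple_graph e.
Let e_sym : symmetric e := proj1 e_simple.
Local Notation L := (laplacian R e).

Lemma laplacian_sqr_rowsum i : \sum_j (L *m L) i j = 0.
Proof.
under eq_bigr do rewrite mxE.
by rewrite exchange_big /= big1 // => k _; rewrite -mulr_sumr laplacian_rowsum mulr0.
Qed.

Lemma heat_bilap_rowsum t i : \sum_j heat_bilap R e t i j = 1.
Proof.
apply: expmx_rowsum => k; under eq_bigr do rewrite mxE.
by rewrite -mulr_sumr laplacian_sqr_rowsum mulr0.
Qed.

Section Complete.
Hypothesis e_complete : complete_graph e.

Lemma laplacian_complete : L = n%:R%:M - const_mx 1.
Proof.
apply/matrixP => i j.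
have -> : (n%:R%:M - const_mx 1 : 'M[R]_n) i j = n%:R *+ (i == j) - 1 by rewrite !mxE.
have [<-|ij] := eqVneq i j; last by rewrite laplacian_offdiag // e_complete // mulr0n add0r.
have := laplacian_rowsum R e i; rewrite (bigD1 i) //=.
rewrite (eq_bigr (fun _ => -1)) => [|k ki]; last first.
  by rewrite laplacian_offdiag 1?eq_sym // e_complete 1?eq_sym.
rewrite sumr_const cardC1 card_ord => /eqP; rewrite addr_eq0 => /eqP ->.
have n_gt0 : (0 < n)%N := leq_ltn_trans (leq0n i) (ltn_ord i).
by rewrite mulNrn opprK mulr1n -{2}(prednK n_gt0) mulrSr addrK.
Qed.

Lemma laplacian_complete_sqr : L *m L = n%:R *: L.
Proof.
have J2 : (const_mx 1 : 'M[R]_n) *m (const_mx 1 : 'M[R]_n) = n%:R *: (const_mx 1 : 'M[R]_n).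
  apply/matrixP => i j; rewrite !mxE (eq_bigr (fun _ => 1)) => [|k _]; last by rewrite !mxE mulr1.
  by rewrite sumr_const card_ord mulr1.
rewrite {1 2}laplacian_complete mulmxBl mul_scalar_mx mulmxBr mul_mx_scalar J2.
by rewrite subrr subr0 -laplacian_complete.
Qed.

Lemma heat_bilap_complete t i j : heat_bilap R e t i j =
  (1 - expR (- t * n%:R ^+ 2)) / n%:R + expR (- t * n%:R ^+ 2) * (i == j)%:R.
Proof.
have n_neq0 : n%:R != 0 :> R by rewrite pnatr_eq0 -lt0n (leq_ltn_trans _ (ltn_ord i)).
set P := n%:R^-1 *: L.
have PP : P *m P = P.
  by rewrite -scalemxAl -scalemxAr laplacian_complete_sqr !scalerA mulrAC mulVf ?mul1r.
have tP : - t *: (L *m L) = (- t * n%:R ^+ 2) *: P.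
  by rewrite laplacian_complete_sqr !scalerA; congr (_ *: _); field.
have Pij k l : P k l = (k == l)%:R - n%:R^-1.
  by rewrite /P laplacian_complete !mxE mulrBr mulrnAr mulVf ?mulr1.
rewrite /heat_bilap tP expmx_idem //; clearbody P; rewrite !mxE !Pij; field; exact: n_neq0.
Qed.

Lemma heat_bilap_complete_ge0 t : 0 <= t -> forall i j, 0 <= heat_bilap R e t i j.
Proof.
move=> t_ge0 i j.
have exp_le1 : expR (- t * n%:R ^+ 2) <= 1 by rewrite expR_le1 mulNr oppr_le0 mulr_ge0 ?exprn_ge0.
by rewrite heat_bilap_complete addr_ge0 ?mulr_ge0 ?expR_ge0 ?invr_ge0 ?subr_ge0.
Qed.

End Complete.

Lemma laplacian_sqr_ge1 a b c :
  e a b -> e b c -> a != c -> ~~ e a c -> 1 <= (L *m L) a c.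
Proof.
move=> ab bc ac nac; have irr := proj2 e_simple.
have ab' : a != b by apply: contraTneq ab => ->; rewrite irr.
have bc' : b != c by apply: contraTneq bc => ->; rewrite irr.
have Lac : L a c = 0 by rewrite laplacian_offdiag // (negbTE nac) oppr0.
rewrite mxE (bigD1 b) //= !laplacian_offdiag // ab bc mulrNN mulr1 lerDl.
apply: sumr_ge0 => k kb; have [->|ka] := eqVneq k a; first by rewrite Lac mulr0.
have [->|kc] := eqVneq k c; first by rewrite Lac mul0r.
by rewrite laplacian_offdiag 1?eq_sym // laplacian_offdiag // mulrNN mulr_ge0.
Qed.

Lemma heat_bilap_neg a b c : e a b -> e b c -> a != c -> ~~ e a c ->
  exists2 t, 0 <= t & heat_bilap R e t a c < 0.
Proof.
move=> ab bc ac nac; have L2ac := laplacian_sqr_ge1 ab bc ac nac.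
set B := L *m L in L2ac *; set K := mx_abs_sum B + 1.
have K_ge1 : 1 <= K by rewrite lerDr sumr_ge0 // => i _; rewrite sumr_ge0.
have K_gt0 : 0 < K := lt_le_trans ltr01 K_ge1.
set t := (4 * K ^+ 2)^-1.
have t_gt0 : 0 < t by rewrite invr_gt0 mulr_gt0 // exprn_gt0.
have tK2 : t * K ^+ 2 = 1 / 4 by rewrite /t; field; rewrite lt0r_neq0.
have tK_ge0 : 0 <= t * K by rewrite mulr_ge0 // ltW.
have tK_le : t * K <= t * K ^+ 2 by rewrite expr2 mulrA ler_peMr.
have tK_range : 0 <= t * K <= 1/2 by apply/andP; split => //; lra.
have rowtB i : \sum_j `|(- t *: B) i j| <= t * K.
  under eq_bigr do rewrite mxE normrM normrN (gtr0_norm t_gt0).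
  by rewrite -mulr_sumr ler_pM2l // (le_trans (row_abs_sum_le B i)) // lerDl.
exists t; first exact: ltW.
apply: le_lt_trans (expmx_offdiag_le ac tK_range rowtB) _.
rewrite mxE exprMn expr2 -mulrA tK2; nra.
Qed.

Lemma complete_graph_heat_bilap_ge0 : connected_graph e ->
  complete_graph e <-> forall t, 0 <= t -> forall i j, 0 <= heat_bilap R e t i j.
Proof.
move=> e_conn; split=> [|heat_ge0]; first exact: heat_bilap_complete_ge0.
have [//|e_not_complete] := pselect (complete_graph e).
have [a [b [c [ab bc ac nac]]]] := not_complete_induced_path2 e_conn e_not_complete.
have [t t_ge0] := heat_bilap_neg ab bc ac nac.
by rewrite ltNge heat_ge0.
Qed.

End Graph.

Theorem proposition2p3 (R : realType) (n : nat) (e : rel 'I_n) :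
  simple_graph e -> connected_graph e ->
  [/\ (complete_graph e <-> positive_semigroup (heat_bilap R e)),
      (positive_semigroup (heat_bilap R e) <-> linfty_contractive (heat_bilap R e)) &
      (complete_graph e <-> linfty_contractive (heat_bilap R e))].
Proof.
move=> e_simple e_conn.
have complete_ge0 := complete_graph_heat_bilap_ge0 R e_simple e_conn.
have positive_ge0 := positive_semigroupP (heat_bilap R e).
have contractive_ge0 := linfty_contractiveP (@heat_bilap_rowsum R n e).
split.
- exact: iff_trans complete_ge0 (iff_sym positive_ge0).
- exact: iff_trans positive_ge0 (iff_sym contractive_ge0).
- exact: iff_trans complete_ge0 (iff_sym contractive_ge0).
Qed.
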